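(* Let $k\in\mathbb N_0$, $0\le\lambda\le k$ with $\lambda$ even, and $n\in\mathbb Z$. (1) If $\lambda\ge2$ and $n<\frac\lambda2$, the multiplicity of the trivial $\mathfrak{sl}_2$-module in the conformal weight space $L(k,\lambda)_{h_\lambda+n}$ is $0$. (2) For $\lambda\ge0$, the multiplicity of the trivial $\mathfrak{sl}_2$-module in $L(k,\lambda)_{h_\lambda+\lambda/2}$ is $1$.
   Context: $L(k,0)$ is the simple affine vertex operator algebra of $\mathfrak{sl}_2$ at level $k$, with Chevalley basis $e,h,f$ and affine modes $x_n$; $L(k,\lambda)$, $0\le\lambda\le k$, is the simple module generated by a highest weight vector of $h_0$-eigenvalue $\lambda$ and conformal weight $h_\lambda=\lambda(\lambda+2)/(4(k+2))$; $L(k,\lambda)_m$ is the $L_0$-eigenspace of eigenvalue $m$, which is a finite-dimensional $\mathfrak{sl}_2$-module via the zero modes $e_0,h_0,f_0$. *)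

From HB Require Import structures.
From mathcomp Require Import all_boot all_order all_algebra.
Set Implicit Arguments. Unset Strict Implicit. Unset Printing Implicit Defensive.
Import Order.TTheory GRing.Theory Num.Theory.
Local Open Scope ring_scope.

Section AffSl2.
Variables (F : numClosedFieldType) (V : lmodType F).

Definition comm (A B : V -> V) (w : V) : V := A (B w) - B (A w).

Definition delta0 (m n : int) : F := if m + n == 0 then 1 else 0.

(* Relations of the affine Lie algebra sl_2^ with the central element acting as
   the scalar [lev], for the normalized form (e,f) = 1, (h,h) = 2:
   [h_m,h_n] = 2 m d_{m+n,0} K, [h_m,e_n] = 2 e_{m+n}, [h_m,f_n] = -2 f_{m+n},
   [e_m,f_n] = h_{m+n} + m d_{m+n,0} K, [e_m,e_n] = [f_m,f_n] = 0. *)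
Definition affine_sl2_action (lev : F) (E H Fo : int -> {linear V -> V}) : Prop :=
  forall (m n : int) (w : V),
  [/\ comm (H m) (H n) w = (2 * m%:~R * delta0 m n * lev) *: w,
      comm (H m) (E n) w = 2%:R *: E (m + n) w,
      comm (H m) (Fo n) w = - (2%:R *: Fo (m + n) w)
    & [/\ comm (E m) (Fo n) w = H (m + n) w + (m%:~R * delta0 m n * lev) *: w,
      comm (E m) (E n) w = 0
    & comm (Fo m) (Fo n) w = 0]].

Definition submodule (E H Fo : int -> {linear V -> V}) (S : V -> Prop) : Prop :=
  [/\ S 0, (forall x y, S x -> S y -> S (x + y)),
      (forall (c : F) x, S x -> S (c *: x))
    & (forall (n : int) x, S x -> [/\ S (E n x), S (H n x) & S (Fo n x)])].

Definition simple_module (E H Fo : int -> {linear V -> V}) : Prop :=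
  forall S : V -> Prop, submodule E H Fo S ->
    (exists2 x, x != 0 & S x) -> forall y, S y.

Definition hw (k lam : nat) : F := (lam * (lam + 2))%:R / (4 * (k + 2))%:R.

(* (V; E,H,Fo; L0; v) is the simple highest weight module L(k,lam), with
   v its highest weight vector and L0 the Virasoro zero mode
   ([L_0, x_n] = -n x_n, L_0 v = h_lam v). *)
Definition is_L (k lam : nat) (E H Fo : int -> {linear V -> V})
    (L0 : {linear V -> V}) (v : V) : Prop :=
  [/\ affine_sl2_action k%:R E H Fo,
      simple_module E H Fo,
      [/\ v != 0, (forall n : int, 0 < n -> [/\ E n v = 0, H n v = 0 & Fo n v = 0]),
          E 0 v = 0 & H 0 v = lam%:R *: v],
      (forall (n : int) (w : V),
          [/\ comm L0 (E n) w = - (n%:~R *: E n w),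
              comm L0 (H n) w = - (n%:~R *: H n w)
            & comm L0 (Fo n) w = - (n%:~R *: Fo n w)])
    & L0 v = hw k lam *: v].

(* w lies in the conformal weight space L_{h_lam + n} and is invariant under
   the zero-mode sl_2 (i.e. spans a trivial sl_2-submodule). The multiplicity
   of the trivial sl_2-module in L_{h_lam+n} is the dimension of the space of
   such w. *)
Definition triv_in_weight (k lam : nat) (E H Fo : int -> {linear V -> V})
    (L0 : {linear V -> V}) (n : int) (w : V) : Prop :=
  [/\ L0 w = (hw k lam + n%:~R) *: w, E 0 w = 0, H 0 w = 0 & Fo 0 w = 0].

End AffSl2.

(* Since L(k,lam) is simple, the creation modes E_n (n < 0), H_n and F_n (n <= 0)
   applied to any nonzero singular vector span it; comparing L_0- and h_0-eigenvalues
   with those of v shows that a nonzero singular vector has the degree and weight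
   of v. An E_0-primitive vector u of degree d and h_0-weight mu < lam - 2d is then
   zero, by induction on d: E_n u, H_n u and F_n u (n > 0) are primitive of lower
   degree and too small a weight, so u is singular. At degree
   m = lam/2 the same argument shows that u |-> E_1^m u embeds the invariants into
   the top space C v. Finally u = sum_j c_j F_0^j E_0^j E_(-1)^m F_0^lam v, with
   c_j chosen so that E_0 u telescopes to 0, is invariant, and F_1^m u is F_0^lam v
   times an alternating binomial sum of a degree-m polynomial in j, i.e. its
   nonzero value at j = -1. *)

From HB Require Import structures.
From mathcomp Require Import all_boot all_order all_algebra.
From mathcomp Require Import ring zify.
Set Implicit Arguments. Unset Strict Implicit. Unset Printing Implicit Defensive.
Import Order.TTheory GRing.Theory Num.Theory.
Local Open Scope ring_scope.

Section FiniteDifferences.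
Variable R : comNzRingType.

Lemma sum_alt_binomial_expr (N i : nat) : (i < N)%N ->
  \sum_(t < N.+1) (-1) ^+ t * 'C(N, t)%:R * (t%:R : R) ^+ i = 0.
Proof.
elim: N i => [|N IH] [|i] // hi.
  have := exprDn (1 : R) (-1) N.+1; rewrite addrN expr0n /= => /esym binomial.
  rewrite -[RHS]binomial; apply: eq_bigr => t _.
  by rewrite expr1n mul1r expr0 mulr1 mulr_natr.
rewrite big_ord_recl /= expr0n /= mulr0 add0r.
transitivity (- N.+1%:R * \sum_(r < i.+1) 'C(i, r)%:R *
   \sum_(s < N.+1) (-1) ^+ s * 'C(N, s)%:R * ((s%:R : R) ^+ (i - r))); last first.
  by rewrite big1 ?mulr0 // => r _; rewrite IH ?mulr0 //; lia.
under [in RHS]eq_bigr do rewrite mulr_sumr.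
rewrite exchange_big /= mulr_sumr; apply: eq_bigr => s _.
rewrite /bump /= add1n.
have binomial_shift : \sum_(r < i.+1) 'C(i, r)%:R *
    ((-1) ^+ s * 'C(N, s)%:R * (s%:R : R) ^+ (i - r))
   = (-1) ^+ s * 'C(N, s)%:R * (s.+1%:R) ^+ i.
  rewrite -natr1 exprDn mulr_sumr; apply: eq_bigr => r _.
  by rewrite expr1n mulr1 mulr_natr; ring.
rewrite binomial_shift.
have absorb : ('C(N.+1, s.+1)%:R * s.+1%:R : R) = N.+1%:R * 'C(N, s)%:R.
  by rewrite -!natrM mulnC -mul_bin_diag.
transitivity (- ((-1) ^+ s * ('C(N.+1, s.+1)%:R * s.+1%:R) * (s.+1%:R : R) ^+ i)).
  by rewrite !exprS; ring.
by rewrite absorb; ring.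
Qed.

Lemma sum_alt_binomial_horner (N : nat) (p : {poly R}) : (size p <= N)%N ->
  \sum_(t < N.+1) (-1) ^+ t * 'C(N, t)%:R * p.[t%:R] = 0.
Proof.
move=> size_p.
under eq_bigr do rewrite horner_coef mulr_sumr.
rewrite exchange_big /= big1 // => i _.
transitivity (p`_i * \sum_(t < N.+1) (-1) ^+ t * 'C(N, t)%:R * (t%:R : R) ^+ i).
  by rewrite mulr_sumr; apply: eq_bigr => t _; ring.
by rewrite sum_alt_binomial_expr ?mulr0 //; apply: leq_trans size_p.
Qed.

Lemma sum_alt_binomial_hornerS (N : nat) (p : {poly R}) : (size p <= N.+1)%N ->
  \sum_(j < N.+1) (-1) ^+ j * 'C(N.+1, j.+1)%:R * p.[j.+1%:R] = p.[0].
Proof.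
move=> /sum_alt_binomial_horner; rewrite big_ord_recl /= expr0 mul1r bin0 mul1r.
move=> /eqP; rewrite addr_eq0 => /eqP ->; rewrite -sumrN.
by apply: eq_bigr => j _; rewrite /bump /= add1n exprS; ring.
Qed.

End FiniteDifferences.

Section IteratedLinear.
Variables (R : pzRingType) (U : lmodType R) (f : {linear U -> U}).

Lemma iter_linear0 n : iter n f 0 = 0.
Proof. by elim: n => //= n ->; rewrite linear0. Qed.

Lemma iter_linearD n x y : iter n f (x + y) = iter n f x + iter n f y.
Proof. by elim: n => //= n ->; rewrite linearD. Qed.

Lemma iter_linearZ n c x : iter n f (c *: x) = c *: iter n f x.
Proof. by elim: n => //= n ->; rewrite linearZ. Qed.

Lemma iter_linearB n x y : iter n f (x - y) = iter n f x - iter n f y.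
Proof. by rewrite iter_linearD -scaleN1r iter_linearZ scaleN1r. Qed.

Lemma iter_linear_sum n (I : Type) (r : seq I) (P : pred I) (g : I -> U) :
  iter n f (\sum_(i <- r | P i) g i) = \sum_(i <- r | P i) iter n f (g i).
Proof.
elim: r => [|i r IH]; first by rewrite !big_nil iter_linear0.
by rewrite !big_cons; case: (P i); rewrite ?iter_linearD IH.
Qed.

End IteratedLinear.

Lemma iter_commute (T : Type) (f g : T -> T) a b x :
  (forall y, f (g y) = g (f y)) -> iter a f (iter b g x) = iter b g (iter a f x).
Proof.
move=> fg; elim: b => //= b <-.
by elim: a {x} (iter b g x) => //= a IH y; rewrite IH fg.
Qed.

Section EigenvectorSums.
Variables (F : fieldType) (V : lmodType F) (T : {linear V -> V}).
Variables (I : Type) (e : I -> F) (f : I -> V).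
Hypothesis f_eigen : forall i, T (f i) = e i *: f i.

Lemma eigen_sum_eq0 (a : F) (r : seq I) (P : pred I) :
  (forall i, P i -> e i != a) ->
  T (\sum_(i <- r | P i) f i) = a *: \sum_(i <- r | P i) f i ->
  \sum_(i <- r | P i) f i = 0.
Proof.
elim: r f f_eigen => [|i r IH] g g_eigen e_neq; first by rewrite big_nil.
rewrite big_cons; case Pi: (P i); last exact: IH.
set y' := \sum_(j <- r | P j) g j; set y := _ + _ => Ty.
have Ty' : T y' = a *: y - e i *: g i by rewrite -Ty linearD g_eigen addrC addKr.
pose g' j := (e j - e i) *: g j.
have sum_g' : \sum_(j <- r | P j) g' j = (a - e i) *: y.
  under eq_bigr do rewrite /g' scalerBl.
  rewrite sumrB -scaler_sumr -/y'.
  under eq_bigr do rewrite -g_eigen.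
  by rewrite -linear_sum -/y' Ty' /y scalerBl [e i *: (_ + _)]scalerDr opprD addrA.
have : \sum_(j <- r | P j) g' j = 0.
  apply: IH => //; first by move=> j; rewrite /g' linearZ /= g_eigen !scalerA mulrC.
  by rewrite sum_g' linearZ /= Ty !scalerA mulrC.
rewrite sum_g' => /eqP; rewrite scaler_eq0 subr_eq0 eq_sym (negbTE (e_neq i Pi)) /=.
by move/eqP.
Qed.

Lemma eigen_sum_component (a : F) (r : seq I) (P : pred I) :
  T (\sum_(i <- r | P i) f i) = a *: \sum_(i <- r | P i) f i ->
  \sum_(i <- r | P i) f i = \sum_(i <- r | P i && (e i == a)) f i.
Proof.
move=> Ty; rewrite (bigID (fun i => e i == a)) /=.
have Ty_eq : T (\sum_(i <- r | P i && (e i == a)) f i)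
    = a *: \sum_(i <- r | P i && (e i == a)) f i.
  by rewrite linear_sum scaler_sumr; apply: eq_bigr => i /andP[_ /eqP <-].
have Ty_neq : T (\sum_(i <- r | P i && (e i != a)) f i)
    = a *: \sum_(i <- r | P i && (e i != a)) f i.
  move: Ty; rewrite (bigID (fun i => e i == a)) /= linearD Ty_eq scalerDr.
  by move/addrI.
by rewrite (eigen_sum_eq0 _ Ty_neq) ?addr0 // => i /andP[].
Qed.

End EigenvectorSums.

Lemma size_prod_linear_leq (R : nzSemiRingType) n (p : 'I_n -> {poly R}) :
  (forall i, (size (p i) <= 2)%N) -> (size (\prod_(i < n) p i)%R <= n.+1)%N.
Proof.
move=> size_p; apply: leq_trans (size_poly_prod_leq _ _) _.
have := leq_sum (index_enum 'I_n) (fun i (_ : true) => size_p i).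
rewrite sum_nat_cond_const cardsT card_ord => sum_le.
by rewrite leq_subLR addnS ltnS addnn -mul2n mulnC.
Qed.

Definition lower_raise_coef (R : pzRingType) (lev : R) (n : nat) (mu : int) : R :=
  \prod_(i < n) (i.+1%:R * (lev - mu%:~R - i%:R)).

Section TrivialVectorCoefficients.
Variable R : numFieldType.

Lemma natr_fact_neq0 n : (n`!%:R : R) != 0.
Proof. by rewrite pnatr_eq0 -lt0n fact_gt0. Qed.

Lemma natr_fact_prod n : \prod_(i < n) (i.+1%:R : R) = n`!%:R.
Proof.
elim: n => [|n IH]; first by rewrite big_ord0 fact0.
by rewrite big_ord_recr /= IH factS natrM mulrC.
Qed.

(* The coefficients of the sl_2-invariant vector [\sum_j inv_coef j F_0^j E_0^j y]
   built from a vector [y] of weight 0 killed by [E_0^(lam+1)]. *)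
Definition inv_coef (j : nat) : R := (-1) ^+ j / (j`! * j.+1`!)%:R.

Lemma inv_coef_rec j : inv_coef j.+1 * (j.+1%:R * j.+2%:R) = - inv_coef j.
Proof.
rewrite /inv_coef !factS !natrM exprS.
have j1_neq0 : (1 + j%:R : R) != 0 by rewrite nat1r pnatr_eq0.
have j2_neq0 : (2 + j%:R : R) != 0 by rewrite -natrD pnatr_eq0.
by field; rewrite natr_fact_neq0 j1_neq0 j2_neq0.
Qed.

Lemma inv_coef_binomial lam j :
  lam.+1%:R * (inv_coef j * (lam ^_ j * j`!)%:R) = (-1) ^+ j * 'C(lam.+1, j.+1)%:R :> R.
Proof.
have binomial : ('C(lam.+1, j.+1)%:R : R) = lam.+1%:R * (lam ^_ j)%:R / j.+1`!%:R.
  by rewrite -natrM -ffactSS -bin_ffact natrM mulfK // natr_fact_neq0.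
rewrite binomial /inv_coef factS !natrM.
have j1_neq0 : (1 + j%:R : R) != 0 by rewrite nat1r pnatr_eq0.
by field; rewrite natr_fact_neq0 j1_neq0.
Qed.

(* [lower_raise_coef] is a polynomial of degree [m] in [j], so the alternating
   binomial sum only sees its value at [j + 1 = 0], which is nonzero. *)
Lemma trivial_vector_coef_neq0 (k m lam : nat) : lam = (m + m)%N ->
  \sum_(j < lam.+1) inv_coef j * ((lam ^_ j * j`!)%:R *
     lower_raise_coef (k%:R : R) m (2 * j%:Z - lam%:Z)) != 0.
Proof.
move=> lam_double.
pose q := \prod_(i < m) ((-2 : R)%:P * 'X + ((k + lam + 2 - i)%N%:R)%:P).
have q_eval j : lower_raise_coef (k%:R : R) m (2 * j%:Z - lam%:Z) = m`!%:R * q.[j.+1%:R].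
  rewrite /lower_raise_coef horner_prod big_split /= natr_fact_prod; congr (_ * _).
  apply: eq_bigr => i _; rewrite !hornerE natrB; last by have := ltn_ord i; lia.
  by rewrite intrB intrM /= !natrD -!natr1; ring.
have size_q : (size q <= lam.+1)%N.
  apply: leq_trans (size_prod_linear_leq _) _; last by lia.
  move=> i; rewrite size_MXaddC; case: ifP => // _; exact: size_polyC_leq1.
have q0_neq0 : q.[0] != 0.
  rewrite horner_prod prodf_seq_neq0; apply/allP => i _ /=.
  by rewrite !hornerE pnatr_eq0; have := ltn_ord i; lia.
have sum_eq : lam.+1%:R * \sum_(j < lam.+1) inv_coef j * ((lam ^_ j * j`!)%:R *
     lower_raise_coef (k%:R : R) m (2 * j%:Z - lam%:Z)) = m`!%:R * q.[0].
  rewrite -(sum_alt_binomial_hornerS size_q) !mulr_sumr; apply: eq_bigr => j _.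
  rewrite q_eval -inv_coef_binomial; ring.
apply: contra_neq (mulf_neq0 (natr_fact_neq0 m) q0_neq0) => sum0.
by rewrite -sum_eq sum0 mulr0.
Qed.

End TrivialVectorCoefficients.

Inductive sl2_gen := gE | gH | gF.

(* The mode [(g, n)] stands for [g_n]; it has degree [-n] and [h_0]-weight [gen_weight g]. *)
Definition mode := (sl2_gen * int)%type.

Definition gen_weight (g : sl2_gen) : int :=
  match g with gE => 2 | gH => 0 | gF => -2 end.

Definition word_degree (M : seq mode) : int := \sum_(x <- M) - x.2.
Definition word_weight (M : seq mode) : int := \sum_(x <- M) gen_weight x.1.

Definition creation (x : mode) : bool :=
  if x.1 is gE then x.2 < 0 else x.2 <= 0.

Lemma word_degree_cons x M : word_degree (x :: M) = - x.2 + word_degree M.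
Proof. by rewrite /word_degree big_cons. Qed.

Lemma word_weight_cons x M : word_weight (x :: M) = gen_weight x.1 + word_weight M.
Proof. by rewrite /word_weight big_cons. Qed.

Lemma creation_le0 x : creation x -> x.2 <= 0.
Proof. by case: x => [[] n] //= /ltW. Qed.

Lemma creation_word_degree_ge0 M : all creation M -> 0 <= word_degree M.
Proof.
elim: M => [|x M IH] /=; first by rewrite /word_degree big_nil.
move=> /andP[/creation_le0 x_le0 /IH]; rewrite word_degree_cons; lia.
Qed.

Lemma creation_word_weight_le0 M :
  all creation M -> word_degree M = 0 -> word_weight M <= 0.
Proof.
elim: M => [|[g n] M IH] /=; first by rewrite /word_weight big_nil.
move=> /andP[cx cM]; have := creation_word_degree_ge0 cM.
have := creation_le0 cx; rewrite word_degree_cons word_weight_cons /= => n_le0 degM deg0.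
have /IH : word_degree M = 0 by lia.
by move=> /(_ cM); move: cx; rewrite /creation; case: g => /= cx; lia.
Qed.

Definition neutral (x : mode) : bool := if x.1 is gH then x.2 == 0 else false.

Lemma creation_word_neutral M : all creation M ->
  word_degree M = 0 -> word_weight M = 0 -> all neutral M.
Proof.
elim: M => [|[g n] M IH] //= /andP[cx cM].
have := creation_word_weight_le0 cM; have := creation_word_degree_ge0 cM.
have := creation_le0 cx; rewrite word_degree_cons word_weight_cons /= => n_le0 degM wM deg0.
have n0 : n = 0 by lia.
have degM0 : word_degree M = 0 by lia.
move: cx (wM degM0); rewrite n0 /creation /neutral; case: g => //= _ wM0 w0.
  by rewrite IH //; lia.
by lia.
Qed.

Section AffineSl2.
Variables (F : numClosedFieldType) (V : lmodType F) (lev : F).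
Variables (E H Fo : int -> {linear V -> V}).
Hypothesis aff : affine_sl2_action lev E H Fo.

Let swap_of_comm (A B : V -> V) w c : comm A B w = c -> A (B w) = B (A w) + c.
Proof. by rewrite /comm => <-; rewrite addrC subrK. Qed.

Let swap_of_commN (A B : V -> V) w c : comm B A w = c -> A (B w) = B (A w) - c.
Proof. by rewrite /comm => <-; rewrite opprB addrC subrK. Qed.

Lemma commHH m n w :
  H m (H n w) = H n (H m w) + (2 * m%:~R * delta0 F m n * lev) *: w.
Proof. by apply: swap_of_comm; case: (aff m n w). Qed.

Lemma commHE m n w : H m (E n w) = E n (H m w) + 2%:R *: E (m + n) w.
Proof. by apply: swap_of_comm; case: (aff m n w). Qed.

Lemma commHF m n w : H m (Fo n w) = Fo n (H m w) - 2%:R *: Fo (m + n) w.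
Proof. by apply: swap_of_comm; case: (aff m n w). Qed.

Lemma commEF m n w :
  E m (Fo n w) = Fo n (E m w) + (H (m + n) w + (m%:~R * delta0 F m n * lev) *: w).
Proof. by apply: swap_of_comm; case: (aff m n w) => _ _ _ []. Qed.

Lemma commEE m n w : E m (E n w) = E n (E m w).
Proof. by rewrite (@swap_of_comm _ _ _ 0) ?addr0 //; case: (aff m n w) => _ _ _ []. Qed.

Lemma commFF m n w : Fo m (Fo n w) = Fo n (Fo m w).
Proof. by rewrite (@swap_of_comm _ _ _ 0) ?addr0 //; case: (aff m n w) => _ _ _ []. Qed.

Lemma commEH m n w : E m (H n w) = H n (E m w) - 2%:R *: E (n + m) w.
Proof. by apply: swap_of_commN; case: (aff n m w). Qed.

Lemma commFH m n w : Fo m (H n w) = H n (Fo m w) + 2%:R *: Fo (n + m) w.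
Proof.
by rewrite (@swap_of_commN _ _ _ (- (2%:R *: Fo (n + m) w))) ?opprK //; case: (aff n m w).
Qed.

Lemma commFE m n w :
  Fo m (E n w) = E n (Fo m w) - (H (n + m) w + (n%:~R * delta0 F n m * lev) *: w).
Proof. by apply: swap_of_commN; case: (aff n m w) => _ _ _ []. Qed.

Definition mode_op (x : mode) : {linear V -> V} :=
  match x.1 with gE => E x.2 | gH => H x.2 | gF => Fo x.2 end.

Definition word_act (M : seq mode) (u : V) : V := foldr (fun x w => mode_op x w) u M.

Lemma mode_op_comm x y w : exists z c1 c2,
  mode_op x (mode_op y w) = mode_op y (mode_op x w) + c1 *: mode_op z w + c2 *: w.
Proof.
case: x => [[] m]; case: y => [[] n]; rewrite /mode_op /=.
- by exists (gE, n), 0, 0; rewrite commEE !scale0r !addr0.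
- by exists (gE, n + m), (-2), 0; rewrite commEH scale0r addr0 scaleNr.
- by exists (gH, m + n), 1, (m%:~R * delta0 F m n * lev); rewrite commEF scale1r addrA.
- by exists (gE, m + n), 2%:R, 0; rewrite commHE scale0r addr0.
- by exists (gE, n), 0, (2 * m%:~R * delta0 F m n * lev); rewrite commHH scale0r addr0.
- by exists (gF, m + n), (-2), 0; rewrite commHF scale0r addr0 scaleNr.
- exists (gH, n + m), (-1), (- (n%:~R * delta0 F n m * lev)).
  by rewrite commFE opprD addrA scaleN1r scaleNr.
- by exists (gF, n + m), 2%:R, 0; rewrite commFH scale0r addr0.
- by exists (gF, n), 0, 0; rewrite commFF !scale0r !addr0.
Qed.

Definition singular (u : V) : Prop := forall x, ~~ creation x -> mode_op x u = 0.

Definition creation_span (u y : V) : Prop :=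
  exists s : seq (F * seq mode), y = \sum_(p <- s | all creation p.2) p.1 *: word_act p.2 u.

Section CreationSpan.
Variable u : V.

Lemma creation_span0 : creation_span u 0.
Proof. by exists [::]; rewrite big_nil. Qed.

Lemma creation_spanD x y :
  creation_span u x -> creation_span u y -> creation_span u (x + y).
Proof. by move=> [s1 ->] [s2 ->]; exists (s1 ++ s2); rewrite big_cat. Qed.

Lemma creation_spanZ c x : creation_span u x -> creation_span u (c *: x).
Proof.
move=> [s ->]; exists (map (fun p => (c * p.1, p.2)) s).
by rewrite big_map scaler_sumr; apply: eq_bigr => p _ /=; rewrite scalerA.
Qed.

Lemma creation_span_sum (I : Type) (r : seq I) (P : pred I) (g : I -> V) :
  (forall i, P i -> creation_span u (g i)) -> creation_span u (\sum_(i <- r | P i) g i).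
Proof.
move=> span_g; elim: r => [|i r IH]; first by rewrite big_nil; apply: creation_span0.
by rewrite big_cons; case Pi: (P i) => //; apply: creation_spanD (span_g _ Pi) IH.
Qed.

Lemma creation_span_word M : all creation M -> creation_span u (word_act M u).
Proof.
by move=> cM; exists [:: (1, M)]; rewrite big_cons big_nil /= cM scale1r addr0.
Qed.

Lemma creation_span_creation x y :
  creation x -> creation_span u y -> creation_span u (mode_op x y).
Proof.
move=> cx [s ->]; exists (map (fun p => (p.1, x :: p.2)) s).
rewrite big_map linear_sum; apply: eq_big => p /=; first by rewrite cx.
by move=> _; rewrite linearZ.
Qed.

(* Moving an annihilation mode to the right through a creation word, by the
   commutation relations, until it hits [u]. *)
Lemma creation_span_op_word x M : singular u -> all creation M ->
  creation_span u (mode_op x (word_act M u)).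
Proof.
move=> su; elim: M x => [|y M IH] x /=.
  move=> _; case cx: (creation x); first by apply: (@creation_span_word [:: x]); rewrite /= cx.
  by rewrite su ?cx //; apply: creation_span0.
move=> /andP[cy cM]; case cx: (creation x).
  by apply: (@creation_span_word [:: x, y & M]) => /=; rewrite cx cy cM.
have [z [c1 [c2 ->]]] := mode_op_comm x y (word_act M u).
apply: creation_spanD; [apply: creation_spanD|].
- exact: creation_span_creation (IH _ cM).
- exact: creation_spanZ (IH _ cM).
- exact: creation_spanZ (creation_span_word cM).
Qed.

Lemma creation_span_op x y :
  singular u -> creation_span u y -> creation_span u (mode_op x y).
Proof.
move=> su [s ->]; rewrite linear_sum; apply: creation_span_sum => p cp.
by rewrite linearZ; apply: creation_spanZ; apply: creation_span_op_word.
Qed.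

Lemma creation_span_full :
  simple_module E H Fo -> singular u -> u != 0 -> forall y, creation_span u y.
Proof.
move=> simple su u_neq0; apply: simple; last by exists u => //; apply: (@creation_span_word [::]).
split; [exact: creation_span0 | exact: creation_spanD | exact: creation_spanZ |].
move=> n y span_y; split.
- exact: (creation_span_op (gE, n) su span_y).
- exact: (creation_span_op (gH, n) su span_y).
- exact: (creation_span_op (gF, n) su span_y).
Qed.

End CreationSpan.

Lemma H0_mode x w : H 0 (mode_op x w) = mode_op x (H 0 w) + (gen_weight x.1)%:~R *: mode_op x w.
Proof.
case: x => [[] n]; rewrite /mode_op /=.
- by rewrite commHE add0r.
- by rewrite commHH !mulr0 !mul0r !scale0r.
- by rewrite commHF add0r -scaleNr.
Qed.

Lemma H0_word M u b : H 0 u = b *: u ->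
  H 0 (word_act M u) = (b + (word_weight M)%:~R) *: word_act M u.
Proof.
move=> H0u; elim: M => [|x M IH] /=; first by rewrite /word_weight big_nil addr0.
rewrite H0_mode IH linearZ /= -scalerDl word_weight_cons intrD; congr (_ *: _).
by ring.
Qed.

Lemma word_act_neutral M u b : all neutral M -> H 0 u = b *: u ->
  word_act M u = b ^+ size M *: u.
Proof.
move=> + H0u; elim: M => [|[[] n] M IH] //=; first by rewrite scale1r.
by move=> /andP[/eqP /= -> /IH ->]; rewrite /mode_op /= linearZ /= H0u scalerA exprS mulrC.
Qed.

Lemma H0_mode_shift x u (mu : int) : H 0 u = mu%:~R *: u ->
  H 0 (mode_op x u) = (mu + gen_weight x.1)%:~R *: mode_op x u.
Proof. by move=> H0u; rewrite H0_mode H0u linearZ -scalerDl intrD. Qed.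

Lemma H0_iter_mode_shift x u (mu : int) j : H 0 u = mu%:~R *: u ->
  H 0 (iter j (mode_op x) u) = (mu + j%:Z * gen_weight x.1)%:~R *: iter j (mode_op x) u.
Proof.
move=> H0u; elim: j => [|j IH] /=; first by rewrite mul0r addr0.
by rewrite (H0_mode_shift _ IH); congr (_%:~R *: _); lia.
Qed.

Section Grading.
Variable L0 : {linear V -> V}.
Hypothesis L0_comm : forall (n : int) (w : V),
  [/\ comm L0 (E n) w = - (n%:~R *: E n w),
      comm L0 (H n) w = - (n%:~R *: H n w)
    & comm L0 (Fo n) w = - (n%:~R *: Fo n w)].

Lemma L0_mode x w : L0 (mode_op x w) = mode_op x (L0 w) - x.2%:~R *: mode_op x w.
Proof. by case: x => [[] n]; apply: swap_of_comm; case: (L0_comm n w). Qed.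

Lemma L0_word M u a : L0 u = a *: u ->
  L0 (word_act M u) = (a + (word_degree M)%:~R) *: word_act M u.
Proof.
move=> L0u; elim: M => [|x M IH] /=; first by rewrite /word_degree big_nil addr0.
rewrite L0_mode IH linearZ /= -scalerBl word_degree_cons intrD intrN; congr (_ *: _).
by ring.
Qed.

Lemma L0_mode_shift x u a (d : int) : L0 u = (a + d%:~R) *: u ->
  L0 (mode_op x u) = (a + (d - x.2)%:~R) *: mode_op x u.
Proof. by move=> L0u; rewrite L0_mode L0u linearZ -scalerBl intrB addrA. Qed.

Lemma L0_iter_mode_shift x u a (d : int) j : L0 u = (a + d%:~R) *: u ->
  L0 (iter j (mode_op x) u) = (a + (d - j%:Z * x.2)%:~R) *: iter j (mode_op x) u.
Proof.
move=> L0u; elim: j => [|j IH] /=; first by rewrite mul0r subr0.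
by rewrite (L0_mode_shift _ IH); congr ((_ + _%:~R) *: _); lia.
Qed.

End Grading.

Lemma E0_iter_F0 z (mu : int) j : H 0 z = mu%:~R *: z ->
  E 0 (iter j.+1 (Fo 0) z)
  = iter j.+1 (Fo 0) (E 0 z) + (j.+1%:R * (mu%:~R - j%:R)) *: iter j (Fo 0) z.
Proof.
move=> H0z; elim: j => [|j IH].
  by rewrite /= commEF add0r H0z !mul0r scale0r addr0 mul1r subr0.
rewrite [iter j.+2 _ _]/= commEF IH linearD linearZ /= add0r mul0r mul0r scale0r addr0.
rewrite (H0_iter_mode_shift (gF, 0) j.+1 H0z) -addrA -scalerDl; congr (_ + _ *: _).
by rewrite intrD intrM /= -!natr1; ring.
Qed.

Lemma F1_iter_E_1 Y (mu : int) n : Fo 1 Y = 0 -> H 0 Y = mu%:~R *: Y ->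
  Fo 1 (iter n.+1 (E (-1)) Y)
  = (n.+1%:R * (lev - mu%:~R - n%:R)) *: iter n (E (-1)) Y.
Proof.
move=> F1Y H0Y; have delta1 : delta0 F (-1) 1 = 1 by [].
elim: n => [|n IH].
  rewrite /= commFE F1Y linear0 add0r delta1 H0Y mulr1 -scalerDl -scaleNr.
  by congr (_ *: _); rewrite mul1r subr0 /=; ring.
rewrite [iter n.+2 _ _]/= commFE IH linearZ /= delta1 -[E (-1) (iter n _ _)]/(iter n.+1 _ _).
rewrite (H0_iter_mode_shift (gE, -1) n.+1 H0Y) mulr1 -scalerDl -scalerBl.
by congr (_ *: _); rewrite intrD intrM /= -!natr1; ring.
Qed.

Lemma F1_iter_E_1_iter Y (mu : int) n : Fo 1 Y = 0 -> H 0 Y = mu%:~R *: Y ->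
  iter n (Fo 1) (iter n (E (-1)) Y) = lower_raise_coef lev n mu *: Y.
Proof.
move=> F1Y H0Y; rewrite /lower_raise_coef.
elim: n => [|n IH]; first by rewrite big_ord0 scale1r.
by rewrite iterSr (F1_iter_E_1 _ F1Y H0Y) iter_linearZ IH scalerA big_ord_recr /= mulrC.
Qed.

End AffineSl2.

Section HighestWeightModule.
Variables (F : numClosedFieldType) (V : lmodType F) (k lam : nat).
Variables (E H Fo : int -> {linear V -> V}) (L0 : {linear V -> V}) (v : V).
Hypothesis HL : is_L k lam E H Fo L0 v.

Local Notation hwt := (hw F k lam).
Local Notation word_act := (word_act E H Fo).
Local Notation singular := (singular E H Fo).

Let aff : affine_sl2_action k%:R E H Fo. Proof. by case: HL. Qed.
Let simple : simple_module E H Fo. Proof. by case: HL. Qed.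
Let L0_comm : forall (n : int) (w : V),
  [/\ comm L0 (E n) w = - (n%:~R *: E n w), comm L0 (H n) w = - (n%:~R *: H n w)
    & comm L0 (Fo n) w = - (n%:~R *: Fo n w)].
Proof. by case: HL. Qed.
Let v_neq0 : v != 0. Proof. by case: HL => _ _ []. Qed.
Let E0v : E 0 v = 0. Proof. by case: HL => _ _ []. Qed.
Let H0v : H 0 v = lam%:R *: v. Proof. by case: HL => _ _ []. Qed.
Let L0v : L0 v = hwt *: v. Proof. by case: HL. Qed.
Let positive_modes_v (n : int) : 0 < n -> [/\ E n v = 0, H n v = 0 & Fo n v = 0].
Proof. by case: HL => _ _ [_ pos _ _] _ _; apply: pos. Qed.

Lemma hw_vector_singular : singular v.
Proof.
case=> [[] n]; rewrite /creation /=.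
- by rewrite -leNgt le_eqVlt => /orP[/eqP <- //|/positive_modes_v[]].
- by rewrite -ltNge => /positive_modes_v[].
- by rewrite -ltNge => /positive_modes_v[].
Qed.

Section CreationSums.
Variables (u : V) (s : seq (F * seq mode)) (P : pred (F * seq mode)).
Local Notation term p := (p.1 *: word_act p.2 u).

Lemma creation_sum_degree a (d : int) : L0 u = a *: u ->
  L0 (\sum_(p <- s | P p) term p) = (a + d%:~R) *: \sum_(p <- s | P p) term p ->
  \sum_(p <- s | P p) term p = \sum_(p <- s | P p && (word_degree p.2 == d)) term p.
Proof.
move=> L0u L0_sum; rewrite (eigen_sum_component (e := fun p => a + (word_degree p.2)%:~R) _ L0_sum).
  by apply: eq_bigl => p; rewrite (inj_eq (addrI a)) eqr_int.
by move=> p; rewrite linearZ /= (L0_word L0_comm _ L0u) !scalerA mulrC.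
Qed.

Lemma creation_sum_weight b (w : int) : H 0 u = b *: u ->
  H 0 (\sum_(p <- s | P p) term p) = (b + w%:~R) *: \sum_(p <- s | P p) term p ->
  \sum_(p <- s | P p) term p = \sum_(p <- s | P p && (word_weight p.2 == w)) term p.
Proof.
move=> H0u H0_sum; rewrite (eigen_sum_component (e := fun p => b + (word_weight p.2)%:~R) _ H0_sum).
  by apply: eq_bigl => p; rewrite (inj_eq (addrI b)) eqr_int.
by move=> p; rewrite linearZ /= (H0_word aff _ H0u) !scalerA mulrC.
Qed.

End CreationSums.

Lemma degree_neg_eq0 y (d : int) : L0 y = (hwt + d%:~R) *: y -> d < 0 -> y = 0.
Proof.
move=> L0y d_neg; have [s y_eq] := creation_span_full aff simple hw_vector_singular v_neq0 y.
rewrite y_eq (creation_sum_degree (d := d) L0v); last by rewrite -y_eq.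
rewrite big_pred0 // => p; apply/negbTE/andP => -[/creation_word_degree_ge0 + /eqP deg_d].
by rewrite deg_d; lia.
Qed.

(* Expanding [v] in creation words applied to [u] forces the degree and
   weight of [u] to be [(0, lam)]. *)
Lemma singular_eq0 u (d mu : int) : singular u ->
  L0 u = (hwt + d%:~R) *: u -> H 0 u = mu%:~R *: u ->
  0 <= d -> (0 < d \/ mu < lam%:Z) -> u = 0.
Proof.
move=> su L0u H0u d_ge0 d_mu; apply/eqP; apply: contraT => u_neq0.
have [s v_eq] := creation_span_full aff simple su u_neq0 v.
have L0v' : L0 v = (hwt + d%:~R + (- d)%:~R) *: v by rewrite L0v intrN addrK.
have H0v' : H 0 v = (mu%:~R + (lam%:Z - mu)%:~R) *: v by rewrite H0v intrB addrC subrK.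
have v_deg := creation_sum_degree (d := - d) L0u.
move: v_neq0; rewrite v_eq v_deg -?v_eq //.
rewrite (creation_sum_weight (w := lam%:Z - mu) H0u); last by rewrite -v_deg -?v_eq.
rewrite big_pred0 ?eqxx // => p; apply/negbTE/andP.
move=> -[/andP[cp /eqP deg_p] /eqP wt_p].
have := creation_word_degree_ge0 cp; rewrite deg_p => d_le0.
have := creation_word_weight_le0 cp; lia.
Qed.

Lemma top_space_line y : L0 y = hwt *: y -> H 0 y = lam%:R *: y -> exists c, y = c *: v.
Proof.
move=> L0y H0y; have [s y_eq] := creation_span_full aff simple hw_vector_singular v_neq0 y.
have L0y' : L0 y = (hwt + (0 : int)%:~R) *: y by rewrite addr0.
have H0y' : H 0 y = (lam%:R + (0 : int)%:~R) *: y by rewrite addr0.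
have y_deg := creation_sum_degree (d := 0) L0v.
rewrite y_eq y_deg -?y_eq //.
rewrite (creation_sum_weight (w := 0) H0v); last by rewrite -y_deg -?y_eq.
exists (\sum_(p <- s | all creation p.2 && (word_degree p.2 == 0) && (word_weight p.2 == 0))
          p.1 * (lam%:R) ^+ size p.2).
rewrite scaler_suml; apply: eq_bigr => p /andP[/andP[cp /eqP deg_p] /eqP wt_p].
by rewrite (word_act_neutral E Fo _ H0v) ?scalerA // creation_word_neutral.
Qed.

Definition primitive (d mu : int) (u : V) : Prop :=
  [/\ L0 u = (hwt + d%:~R) *: u, H 0 u = mu%:~R *: u & E 0 u = 0].

Lemma primitiveE (d mu n : int) u :
  primitive d mu u -> primitive (d - n) (mu + 2) (E n u).
Proof.
case=> L0u H0u E0u; split.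
- exact: (L0_mode_shift L0_comm (gE, n) L0u).
- exact: (H0_mode_shift aff (gE, n) H0u).
- by rewrite (commEE aff) E0u linear0.
Qed.

Lemma primitiveH (d mu n : int) u :
  primitive d mu u -> E n u = 0 -> primitive (d - n) mu (H n u).
Proof.
case=> L0u H0u E0u Enu; split.
- exact: (L0_mode_shift L0_comm (gH, n) L0u).
- by rewrite (H0_mode_shift aff (gH, n) H0u) /= addr0.
- by rewrite (commEH aff) E0u linear0 addr0 Enu scaler0 subr0.
Qed.

Lemma primitiveF (d mu n : int) u :
  primitive d mu u -> H n u = 0 -> primitive (d - n) (mu - 2) (Fo n u).
Proof.
case=> L0u H0u E0u Hnu; split.
- exact: (L0_mode_shift L0_comm (gF, n) L0u).
- exact: (H0_mode_shift aff (gF, n) H0u).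
- by rewrite (commEF aff) E0u linear0 add0r add0r Hnu !mul0r scale0r addr0.
Qed.

Lemma primitive_lincomb (d mu : int) c u1 u2 :
  primitive d mu u1 -> primitive d mu u2 -> primitive d mu (u2 - c *: u1).
Proof.
case=> L0u1 H0u1 E0u1 [L0u2 H0u2 E0u2].
by split; rewrite linearB linearZ /= ?L0u1 ?L0u2 ?H0u1 ?H0u2 ?E0u1 ?E0u2 ?scaler0 ?subrr //
  scalerBr !scalerA mulrC.
Qed.

(* For [n > 0], [H_n u] and [F_n u] are primitive of lower degree and too small
   a weight, so [below] kills them. *)
Lemma primitive_singular (d mu : int) u :
  (forall d' mu' u', d' < d -> primitive d' mu' u' -> mu' < lam%:Z - 2 * d' -> u' = 0) ->
  primitive d mu u -> (forall n : int, 0 < n -> E n u = 0) ->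
  mu < lam%:Z - 2 * d + 2 -> singular u.
Proof.
move=> below pu Epos mu_lt.
have Hpos (n : int) : 0 < n -> H n u = 0.
  move=> n_pos; apply: (below (d - n) mu); first by lia.
    exact: primitiveH (Epos n n_pos).
  by lia.
have [_ _ E0u] := pu.
case=> [[] n]; rewrite /creation /=.
- by rewrite -leNgt le_eqVlt => /orP[/eqP <- //|/Epos].
- by rewrite -ltNge => /Hpos.
rewrite -ltNge => n_pos; apply: (below (d - n) (mu - 2)); first by lia.
  exact: primitiveF (Hpos n n_pos).
by lia.
Qed.

Lemma primitive_eq0 (d mu : int) u :
  primitive d mu u -> mu < lam%:Z - 2 * d -> u = 0.
Proof.
have [N d_lt] : exists N : nat, d < N%:Z by exists `|d|%N.+1; lia.
elim: N => [|N IH] in d mu u d_lt *; move=> [L0u H0u E0u] mu_lt.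
  by apply: (degree_neg_eq0 L0u); lia.
have [d_neg|d_ge0] := ltP d 0; first exact: (degree_neg_eq0 L0u).
have pu : primitive d mu u by [].
have Epos (n : int) : 0 < n -> E n u = 0.
  by move=> n_pos; apply: (IH (d - n) (mu + 2)); [lia | exact: primitiveE | lia].
have su : singular u.
  apply: (primitive_singular _ pu Epos); last by lia.
  by move=> d' mu' u' d'_lt; apply: IH; lia.
by apply: (singular_eq0 su L0u H0u) => //; lia.
Qed.

Lemma primitive_E1_eq0 (m : nat) u :
  primitive m (lam%:Z - 2 * m%:Z) u -> iter m (E 1) u = 0 -> u = 0.
Proof.
elim: m u => [|m IH] u pu E1m_u //.
have E1u : E 1 u = 0.
  apply: IH; last by rewrite -iterSr.
  by have := primitiveE 1 pu; congr (primitive _ _ _); lia.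
have Epos (n : int) : 0 < n -> E n u = 0.
  move=> n_pos; have [->|n_neq1] := eqVneq n 1; first exact: E1u.
  apply: (primitive_eq0 (primitiveE n pu)).
  by move/eqP: n_neq1; lia.
have su : singular u.
  apply: (primitive_singular _ pu Epos); last by lia.
  by move=> d' mu' u' _; apply: primitive_eq0.
have [L0u H0u _] := pu.
by apply: (singular_eq0 su L0u H0u); lia.
Qed.

Lemma primitive_E1_iter_line (m : nat) u :
  primitive m (lam%:Z - 2 * m%:Z) u -> exists c, iter m (E 1) u = c *: v.
Proof.
case=> L0u H0u _; apply: top_space_line.
  rewrite (L0_iter_mode_shift L0_comm (gE, 1) m L0u).
  by rewrite /= mulr1 subrr addr0.
rewrite (H0_iter_mode_shift aff (gE, 1) m H0u) -[lam%:R]/(lam%:Z%:~R).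
by congr (_%:~R *: _); rewrite /=; lia.
Qed.

Lemma primitive_dim_le1 (m : nat) u1 u2 :
  primitive m (lam%:Z - 2 * m%:Z) u1 -> primitive m (lam%:Z - 2 * m%:Z) u2 ->
  u1 != 0 -> exists c, u2 = c *: u1.
Proof.
move=> pu1 pu2 u1_neq0.
have [c1 E1u1] := primitive_E1_iter_line pu1.
have [c2 E1u2] := primitive_E1_iter_line pu2.
have c1_neq0 : c1 != 0.
  apply: contra_neq u1_neq0 => c1_0; apply: primitive_E1_eq0 pu1 _.
  by rewrite E1u1 c1_0 scale0r.
exists (c2 / c1); apply/eqP; rewrite -subr_eq0; apply/eqP.
apply: primitive_E1_eq0 (primitive_lincomb _ pu1 pu2) _.
by rewrite iter_linearB iter_linearZ E1u1 E1u2 scalerA divfK // subrr.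
Qed.

Lemma positive_modes_F0_iter_hw i (n : int) : 0 < n ->
  [/\ E n (iter i (Fo 0) v) = 0, H n (iter i (Fo 0) v) = 0 & Fo n (iter i (Fo 0) v) = 0].
Proof.
move=> n_pos; have delta_n0 : delta0 F n 0 = 0 by rewrite /delta0 addr0 gt_eqF.
elim: i => [|i [E_i H_i F_i]] /=; first exact: positive_modes_v.
split.
- by rewrite (commEF aff) E_i linear0 addr0 H_i delta_n0 mulr0 mul0r scale0r addr0 add0r.
- by rewrite (commHF aff) H_i addr0 F_i linear0 scaler0 subr0.
- by rewrite (commFF aff) F_i linear0.
Qed.

Lemma E0_iter_F0_iter_hw j : (j <= lam)%N ->
  iter j (E 0) (iter lam (Fo 0) v) = (lam ^_ j * j`!)%:R *: iter (lam - j) (Fo 0) v.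
Proof.
have H0v' : H 0 v = lam%:Z%:~R *: v by [].
elim: j => [|j IH] j_lt; first by rewrite subn0 ffactn0 fact0 scale1r.
rewrite iterS IH ?(ltnW j_lt) // linearZ /=.
have -> : (lam - j = (lam - j.+1).+1)%N by lia.
rewrite (E0_iter_F0 aff _ H0v') E0v iter_linear0 add0r scalerA; congr (_ *: _).
have -> : lam = (lam - j.+1 + j.+1)%N by lia.
rewrite addnK ffactnSr factS !natrM.
have -> : (lam - j.+1 + j.+1 - j = (lam - j.+1).+1)%N by lia.
by rewrite /intmul natrD; ring.
Qed.

Lemma E0_iter_F0_iter_hw_over : iter lam.+1 (E 0) (iter lam (Fo 0) v) = 0.
Proof. by rewrite iterS E0_iter_F0_iter_hw // subnn linearZ /= E0v scaler0. Qed.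

Lemma F0_iter_hw_neq0 : iter lam (Fo 0) v != 0.
Proof.
apply: contra_neq v_neq0 => F0v0; apply/eqP.
have := E0_iter_F0_iter_hw (leqnn lam); rewrite F0v0 iter_linear0 subnn /= => /esym/eqP.
by rewrite scaler_eq0 pnatr_eq0 muln_eq0 ffactnn orbb eqn0Ngt fact_gt0.
Qed.

Section TrivialVector.
Variable m : nat.
Hypothesis lam_double : lam = (m + m)%N.

Local Notation y := (iter m (E (-1)) (iter lam (Fo 0) v)).
Local Notation z j := (iter j (E 0) y).

Definition trivial_vector : V := \sum_(j < lam.+1) inv_coef F j *: iter j (Fo 0) (z j).

Lemma H0_E0_iter_y j : H 0 (z j) = (2 * j%:Z)%:~R *: z j.
Proof.
rewrite (H0_iter_mode_shift aff (gE, 0) j (H0_iter_mode_shift aff (gE, -1) m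
  (H0_iter_mode_shift aff (gF, 0) lam (_ : H 0 v = lam%:Z%:~R *: v)))) //.
by congr (_%:~R *: _); rewrite /=; lia.
Qed.

Lemma trivial_vector_L0 : L0 trivial_vector = (hwt + m%:Z%:~R) *: trivial_vector.
Proof.
have L0v' : L0 v = (hwt + 0%:~R) *: v by rewrite addr0.
rewrite linear_sum scaler_sumr; apply: eq_bigr => j _; rewrite linearZ /=.
rewrite (L0_iter_mode_shift L0_comm (gF, 0) j (L0_iter_mode_shift L0_comm (gE, 0) j
  (L0_iter_mode_shift L0_comm (gE, -1) m (L0_iter_mode_shift L0_comm (gF, 0) lam L0v')))).
by rewrite !scalerA mulrC; congr ((_ + _%:~R) * _ *: _); rewrite /=; lia.
Qed.

Lemma trivial_vector_H0 : H 0 trivial_vector = 0.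
Proof.
rewrite linear_sum big1 // => j _; rewrite linearZ /=.
rewrite (H0_iter_mode_shift aff (gF, 0) j (H0_E0_iter_y j)) /=.
by rewrite -[X in X%:~R](_ : 0 = _) ?scale0r ?scaler0 //; lia.
Qed.

Let telescope_term j : V :=
  if j is j'.+1 then inv_coef F j' *: iter j' (Fo 0) (z j'.+1) else 0.

Lemma E0_trivial_vector_term j : E 0 (inv_coef F j *: iter j (Fo 0) (z j))
  = telescope_term j.+1 - telescope_term j.
Proof.
case: j => [|j]; first by rewrite /= subr0 linearZ.
rewrite linearZ /= (E0_iter_F0 aff _ (H0_E0_iter_y j.+1)) scalerDr scalerA.
have -> : (2 * j.+1%:Z)%:~R - j%:R = j.+2%:R :> F.
  by rewrite intrM /= -!natr1; ring.
by rewrite inv_coef_rec scaleNr.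
Qed.

Lemma trivial_vector_E0 : E 0 trivial_vector = 0.
Proof.
rewrite /trivial_vector -(big_mkord xpredT (fun j => inv_coef F j *: iter j (Fo 0) (z j))).
rewrite linear_sum (eq_bigr _ (fun j _ => E0_trivial_vector_term j)).
rewrite telescope_sumr // /= subr0 -[E 0 (z lam)]/(iter lam.+1 (E 0) y).
rewrite (@iter_commute _ (E 0) (E (-1))); last by move=> w; rewrite (commEE aff).
by rewrite E0_iter_F0_iter_hw_over !iter_linear0 scaler0.
Qed.

Lemma trivial_vector_primitive : primitive m 0 trivial_vector.
Proof.
split; [exact: trivial_vector_L0 | by rewrite trivial_vector_H0 scale0r | exact: trivial_vector_E0].
Qed.

Lemma trivial_vector_F0 : Fo 0 trivial_vector = 0.
Proof.
apply: primitive_eq0 (primitiveF trivial_vector_primitive trivial_vector_H0) _.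
by lia.
Qed.

Lemma F1_iter_trivial_vector : iter m (Fo 1) trivial_vector =
  (\sum_(j < lam.+1) inv_coef F j * ((lam ^_ j * j`!)%:R *
     lower_raise_coef (k%:R : F) m (2 * j%:Z - lam%:Z))) *: iter lam (Fo 0) v.
Proof.
rewrite /trivial_vector iter_linear_sum scaler_suml; apply: eq_bigr => j _.
have j_le : (j <= lam)%N by rewrite -ltnS.
rewrite iter_linearZ (@iter_commute _ (Fo 1) (Fo 0)); last by move=> w; rewrite (commFF aff).
rewrite (@iter_commute _ (E 0) (E (-1))); last by move=> w; rewrite (commEE aff).
rewrite E0_iter_F0_iter_hw // !iter_linearZ.
have [_ _ F1_Fv] := positive_modes_F0_iter_hw (lam - j) (ltr01 : (0 : int) < 1).
have H0_Fv := H0_iter_mode_shift aff (gF, 0) (lam - j) (_ : H 0 v = lam%:Z%:~R *: v).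
rewrite (F1_iter_E_1_iter aff m F1_Fv (H0_Fv H0v)) !iter_linearZ -iterD subnKC //.
rewrite !scalerA mulrA; congr ((_ * _ * lower_raise_coef _ _ _) *: _).
by rewrite /=; lia.
Qed.

Lemma trivial_vector_neq0 : trivial_vector != 0.
Proof.
apply: contra_neq F0_iter_hw_neq0 => u0; apply/eqP.
have := F1_iter_trivial_vector; rewrite u0 iter_linear0 => /esym/eqP.
by rewrite scaler_eq0 (negbTE (trivial_vector_coef_neq0 _ _ lam_double)).
Qed.

End TrivialVector.

Lemma triv_in_weight_primitive (n : int) w :
  triv_in_weight k lam E H Fo L0 n w -> primitive n 0 w.
Proof. by case=> L0w E0w H0w _; split; rewrite // H0w scale0r. Qed.

Lemma triv_in_weight_below_eq0 (n : int) w :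
  n < (lam./2)%:Z -> triv_in_weight k lam E H Fo L0 n w -> w = 0.
Proof.
move=> n_lt /triv_in_weight_primitive pw; apply: primitive_eq0 pw _.
have := odd_double_half lam; rewrite -addnn; lia.
Qed.

Lemma triv_in_weight_middle_collinear m w1 w2 : lam = (m + m)%N -> w1 != 0 ->
  triv_in_weight k lam E H Fo L0 m w1 -> triv_in_weight k lam E H Fo L0 m w2 ->
  exists c, w2 = c *: w1.
Proof.
move=> lam_double w1_neq0 /triv_in_weight_primitive pw1 /triv_in_weight_primitive pw2.
have mu0 : lam%:Z - 2 * m%:Z = 0 by lia.
by apply: (primitive_dim_le1 (m := m)) w1_neq0; rewrite mu0.
Qed.

Lemma triv_in_weight_middle_exists m : lam = (m + m)%N ->
  exists2 w, w != 0 & triv_in_weight k lam E H Fo L0 m w.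
Proof.
move=> lam_double; exists (trivial_vector m); first exact: trivial_vector_neq0.
have [L0u _ E0u] := trivial_vector_primitive lam_double.
by split; rewrite // (trivial_vector_H0, trivial_vector_F0).
Qed.

End HighestWeightModule.

Unset Implicit Arguments.

Theorem lemma4p3 (F : numClosedFieldType) (V : lmodType F) (k lam : nat)
    (E H Fo : int -> {linear V -> V}) (L0 : {linear V -> V}) (v : V) :
  (lam <= k)%N -> ~~ odd lam ->
  is_L k lam E H Fo L0 v ->
  (* (1) multiplicity 0 for n < lam/2 when lam >= 2 *)
  ((2 <= lam)%N -> forall (n : int), n < (lam./2)%:Z ->
     forall w : V, triv_in_weight k lam E H Fo L0 n w -> w = 0)
  /\
  (* (2) multiplicity 1 at n = lam/2 : the invariant space is one-dimensional *)
  ((exists2 w : V, w != 0 & triv_in_weight k lam E H Fo L0 (lam./2)%:Z w) /\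
   (forall w1 w2 : V, w1 != 0 ->
      triv_in_weight k lam E H Fo L0 (lam./2)%:Z w1 ->
      triv_in_weight k lam E H Fo L0 (lam./2)%:Z w2 ->
      exists c : F, w2 = c *: w1)).
Proof.
move=> _ lam_even HL.
have lam_double : lam = (lam./2 + lam./2)%N.
  by rewrite addnn -[in LHS](odd_double_half lam) (negbTE lam_even).
split; first by move=> _ n n_lt w; apply: (triv_in_weight_below_eq0 HL).
split; first exact: (triv_in_weight_middle_exists HL).
by move=> w1 w2; apply: (triv_in_weight_middle_collinear HL).
Qed.
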